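(* Let $G$ be a finite simple unmixed graph and suppose the graph $\mathcal{G}=\mathcal{G}_{I_c(G)}$ is a tree. Then $I_c(G)$ is linearly presented if and only if for every path $\{C_1,\ldots,C_n\}$ of $\mathcal{G}$ one has $\alpha_0(G)\ge n-1$ and $\left|\bigcap_{j=1}^n C_j\right|=\alpha_0(G)-(n-1)$.
   Context: $G$ has vertices $t_1,\ldots,t_s$; $S=K[t_1,\ldots,t_s]$, $K$ a field. $G$ is unmixed if all minimal vertex covers (inclusion-minimal vertex sets meeting every edge) have the same size $\alpha_0(G)$. $I_c(G)$ is generated by $\prod_{t_i\in C}t_i$ over minimal vertex covers $C$. The graph $\mathcal{G}$ has the minimal vertex covers as vertices, with $\{C_i,C_j\}$ ($i\ne j$) an edge iff $|C_i\cup C_j|=|C_i|+1$. A path $\{C_1,\ldots,C_n\}$ is a sequence of distinct vertices with $\{C_i,C_{i+1}\}$ an edge for all $i$. A monomial ideal minimally generated by $u_1,\dots,u_r$ is linearly presented if all $u_i$ have the same degree and the kernel of $S^r\to S$, $e_i\mapsto u_i$, is generated by vectors with linear-form entries. *)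

From HB Require Import structures.
From mathcomp Require Import all_boot all_algebra.
From mathcomp Require Import mpoly.

Set Implicit Arguments.
Unset Strict Implicit.
Unset Printing Implicit Defensive.

Import GRing.Theory.
Local Open Scope ring_scope.

(* Graphs: a finite simple graph on vertex set 'I_s (vertex i <-> t_i) *)

Definition simple_graph (s : nat) (e : rel 'I_s) : Prop :=
  irreflexive e /\ ssrbool.symmetric e.

Definition vertex_cover (s : nat) (e : rel 'I_s) (C : {set 'I_s}) : bool :=
  [forall x, forall y, e x y ==> (x \in C) || (y \in C)].

Definition min_vertex_cover (s : nat) (e : rel 'I_s) (C : {set 'I_s}) : bool :=
  minset (vertex_cover e) C.

Definition unmixed (s : nat) (e : rel 'I_s) : Prop :=
  forall C D : {set 'I_s}, min_vertex_cover e C -> min_vertex_cover e D ->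
    #|C| = #|D|.

Definition alpha0 (s : nat) (e : rel 'I_s) : nat :=
  #|[arg min_(C < [set: 'I_s] | vertex_cover e C) #|C| ]|.

(* The graph \mathcal{G}: vertices = minimal vertex covers,            *)

Definition cov_adj (s : nat) (e : rel 'I_s) (C D : {set 'I_s}) : bool :=
  [&& min_vertex_cover e C, min_vertex_cover e D, C != D &
      #|C :|: D| == #|C|.+1].

Definition cov_path (s : nat) (e : rel 'I_s) (p : seq {set 'I_s}) : bool :=
  [&& p != [::], all (min_vertex_cover e) p, uniq p &
      path (cov_adj e) (head set0 p) (behead p)].

Definition cov_cycle (s : nat) (e : rel 'I_s) (p : seq {set 'I_s}) : bool :=
  [&& (3 <= size p)%N, all (min_vertex_cover e) p, uniq p &
      cycle (cov_adj e) p].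

Definition cov_graph_tree (s : nat) (e : rel 'I_s) : Prop :=
  (forall C D, min_vertex_cover e C -> min_vertex_cover e D ->
     exists p, cov_path e p /\ head set0 p = C /\ last set0 p = D) /\
  (forall p, ~~ cov_cycle e p).

(* p is homogeneous of degree d (every monomial of p has degree d;
   the zero polynomial is homogeneous of every degree) *)
Definition homog_of (K : fieldType) (s d : nat) (p : {mpoly K[s]}) : Prop :=
  forall m, m \in msupp p -> mdeg m = d.

Definition syzygy (K : fieldType) (s : nat) (us : seq {mpoly K[s]})
  (v : 'I_(size us) -> {mpoly K[s]}) : Prop :=
  \sum_(i < size us) v i * us`_i = 0.

Definition linearly_presented (K : fieldType) (s : nat) (us : seq {mpoly K[s]}) : Prop :=
  (exists d, forall u, u \in us -> homog_of d u) /\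
  (forall v, syzygy v ->
     exists (N : nat) (c : 'I_N -> {mpoly K[s]})
            (w : 'I_N -> 'I_(size us) -> {mpoly K[s]}),
       (forall k, syzygy (w k) /\ forall i, homog_of 1 (w k i)) /\
       (forall i, v i = \sum_(k < N) c k * w k i)).

Definition cover_monomial (K : fieldType) (s : nat) (C : {set 'I_s}) : {mpoly K[s]} :=
  \prod_(i in C) 'X_i.

Definition Ic_gens (K : fieldType) (s : nat) (e : rel 'I_s) : seq {mpoly K[s]} :=
  [seq cover_monomial K C | C <- enum (min_vertex_cover e)].

(* Two minimal vertex covers C, D of an unmixed graph are adjacent in the
   graph of covers exactly when |C u D| = alpha0 + 1, and then, with
   C \ D = {a} and D \ C = {b}, the vector t_b e_C - t_a e_D is a linear
   syzygy of I_c(G).  Since the syzygies of monomials are generated by the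
   pair syzygies, I_c(G) is linearly presented iff any two minimal covers C, D
   are joined by a path of covers contained in C u D; conversely, a suitable
   coefficient functional detects a missing path.
   Along a path each step removes at most one vertex from the running
   intersection, so |C_1 n ... n C_n| >= alpha0 - (n - 1), with equality for
   all paths iff every path lies in the union of its two ends; in a tree the
   path between two covers is unique, so this is the condition above. *)

From mathcomp Require Import all_boot all_algebra.
From mathcomp Require Import mpoly.
From mathcomp Require Import zify.

Set Implicit Arguments.
Unset Strict Implicit.
Unset Printing Implicit Defensive.

Import GRing.Theory.

Section AcyclicPaths.
Variables (T : eqType) (r : rel T).
Hypothesis r_sym : ssrbool.symmetric r.
Hypothesis r_acyclic : forall c, uniq c -> cycle r c -> size c < 3.

Lemma cycle_rcons_cat_rev x w A B :
  path r x (rcons A w) -> path r x (rcons B w) -> cycle r (x :: rcons A w ++ rev B).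
Proof.
move=> pA pB; rewrite /= rcons_cat cat_path pA last_rcons /=.
move: pB; rewrite -(eq_path (fun u v => r_sym v u)) -rev_path.
by rewrite last_rcons belast_rcons rev_cons.
Qed.

Lemma acyclic_paths_head x P Q :
  path r x P -> path r x Q -> uniq (x :: P) -> uniq (x :: Q) -> has (mem Q) P ->
  head x P = head x Q.
Proof.
move=> + + + + hasQ; case: (split_find hasQ) => w A P2 wQ noA.
case/path.splitP: wQ noA => B Q2 noA; rewrite !cat_path -!cat_cons !cat_uniq.
move=> /andP[pA _] /andP[pB _] /andP[uA _] /andP[uB _].
case: (posnP (size A + size B)) => [/eqP|AB].
  by rewrite addn_eq0 !size_eq0 => /andP[/eqP-> /eqP->].
exfalso; suff uc : uniq (x :: rcons A w ++ rev B).
  have := r_acyclic uc (cycle_rcons_cat_rev pA pB).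
  by rewrite /= size_cat size_rcons size_rev; lia.
move: uB; rewrite -cat_cons cat_uniq uA rev_uniq /= rcons_uniq mem_rcons inE negb_or.
case/and3P=> /andP[xw xB] wB -> /=; rewrite andbT; apply/hasPn => b; rewrite mem_rev => bB.
rewrite inE mem_rcons inE; apply/or3P; case=> [/eqP bx|/eqP bw|bA].
- by rewrite -bx bB in xB.
- by rewrite -bw bB in wB.
- by move/hasPn: noA => /(_ b bA) /=; rewrite mem_cat mem_rcons inE bB orbT.
Qed.

Lemma acyclic_path_uniq x P Q :
  path r x P -> path r x Q -> uniq (x :: P) -> uniq (x :: Q) -> last x P = last x Q ->
  P = Q.
Proof.
elim: P x Q => [|y P IHP] x [|z Q] //= pP pQ uP uQ eq_last.
- by move: uQ; rewrite eq_last mem_last.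
- by move: uP; rewrite -eq_last mem_last.
have hasQ : has (mem (z :: Q)) (y :: P).
  by apply/hasP; exists (last y P); [exact: mem_last | rewrite /= eq_last mem_last].
have /= yz := @acyclic_paths_head x (y :: P) (z :: Q) pP pQ uP uQ hasQ.
move: pP pQ uP uQ eq_last; rewrite -{}yz => /andP[_ pP] /andP[_ pQ] /andP[_ uP] /andP[_ uQ].
by move/(IHP y Q pP pQ uP uQ) ->.
Qed.

End AcyclicPaths.

Section CoverGraph.
Variables (s : nat) (e : rel 'I_s).
Hypothesis e_unmixed : unmixed e.

Local Notation mvc := (min_vertex_cover e).
Local Notation adj := (cov_adj e).

Lemma card_min_vertex_cover C : mvc C -> #|C| = alpha0 e.
Proof.
move=> mvcC; rewrite /alpha0; case: arg_minnP => [|D coverD minD].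
  by apply/forallP => x; apply/forallP => y; rewrite !in_setT implybT.
apply: e_unmixed => //; apply/minsetP; split => // B coverB sBD.
by apply/eqP; rewrite eqEcard sBD minD.
Qed.

Lemma cov_adj_min C D : adj C D -> mvc C /\ mvc D.
Proof. by case/and4P. Qed.

Lemma cov_adj_sym : ssrbool.symmetric adj.
Proof.
move=> C D; rewrite /cov_adj; case mvcC: (mvc C); case mvcD: (mvc D) => //=.
by rewrite (eq_sym D) setUC (card_min_vertex_cover mvcC) (card_min_vertex_cover mvcD).
Qed.

Lemma cov_adj_setD C D : adj C D -> exists a, C :\: D = [set a].
Proof.
move=> adjCD; have [mvcC mvcD] := cov_adj_min adjCD.
move: adjCD => /and4P[_ _ _ /eqP cardU]; apply/cards1P.
have := subset_leq_card (subsetIl C D); move: cardU.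
rewrite cardsU cardsD (card_min_vertex_cover mvcC) (card_min_vertex_cover mvcD); lia.
Qed.

Lemma path_cov_adj_min x p : path adj x p -> all mvc p.
Proof.
elim: p x => [|y p IHp] x //= /andP[adj_xy /IHp ->].
by rewrite (cov_adj_min adj_xy).2.
Qed.

Lemma cov_pathE x q : cov_path e (x :: q) = [&& mvc x, uniq (x :: q) & path adj x q].
Proof.
rewrite /cov_path /=; case pq: (path adj x q); last by rewrite !andbF.
by rewrite (path_cov_adj_min pq) andbT.
Qed.

Lemma cov_path_suffix p1 C p2 : cov_path e (p1 ++ C :: p2) -> cov_path e (C :: p2).
Proof.
case: p1 => [//|y p1]; rewrite cat_cons !cov_pathE => /and3P[_ + pp].
rewrite -cat_cons cat_uniq => /and3P[_ _ ->].
by move: pp; rewrite cat_path => /andP[_ /andP[/cov_adj_min[_ ->] pC]].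
Qed.

Lemma bigcap_sub (p : seq {set 'I_s}) C : C \in p -> \bigcap_(D <- p) D \subset C.
Proof. by move=> pC; rewrite bigcap_seq bigcap_inf. Qed.

Lemma bigcap_rcons_setD (x : {set 'I_s}) q z :
  \bigcap_(C <- x :: rcons q z) C = \bigcap_(C <- x :: q) C :\: (last x q :\: z).
Proof.
have sIL := bigcap_sub (mem_last x q).
by rewrite -rcons_cons big_rcons setDDr (eqP (_ : _ :\: last x q == set0)) ?setD_eq0 ?set0U.
Qed.

Lemma card_bigcap_path x q : mvc x -> path adj x q ->
  alpha0 e <= #|\bigcap_(C <- x :: q) C| + size q.
Proof.
move=> mvcx; elim/last_ind: q => [|q z IHq].
  by rewrite big_seq1 (card_min_vertex_cover mvcx) addn0.
rewrite rcons_path bigcap_rcons_setD size_rcons => /andP[/IHq le_q /cov_adj_setD[a ->]].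
by move: le_q; rewrite (cardsD1 a (\bigcap_(C <- x :: q) C)); case: (_ \in _) => /=; lia.
Qed.

Lemma card_bigcap_path_lt x q t : mvc x -> path adj x q ->
  t \notin x -> t \notin last x q -> has (fun C : {set 'I_s} => t \in C) q ->
  alpha0 e < #|\bigcap_(C <- x :: q) C| + size q.
Proof.
move=> mvcx + tx; elim/last_ind: q => [//|q z IHq].
rewrite rcons_path last_rcons has_rcons => /andP[pq adj_z] /negbTE tz.
rewrite tz /= => has_t; have [a La] := cov_adj_setD adj_z.
rewrite bigcap_rcons_setD La size_rcons.
have := cardsD1 a (\bigcap_(C <- x :: q) C).
have [tL|tL] := boolP (t \in last x q); last first.
  by have := IHq pq tL has_t; case: (_ \in _) => /=; lia.
have ta : t = a by apply/set1P; rewrite -La inE tz tL.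
have aI : a \notin \bigcap_(C <- x :: q) C.
  by rewrite -ta; apply: contra tx; apply/subsetP/bigcap_sub/mem_head.
rewrite (negbTE aI) add0n => <-; have := card_bigcap_path mvcx pq; lia.
Qed.

Definition within_ends (p : seq {set 'I_s}) : Prop :=
  {in p, forall C : {set 'I_s}, C \subset head set0 p :|: last set0 p}.

Lemma within_ends_of_card x q : mvc x -> path adj x q ->
  #|\bigcap_(C <- x :: q) C| + size q = alpha0 e -> within_ends (x :: q).
Proof.
move=> mvcx pq card_eq C qC; apply/subsetP => t tC; rewrite inE.
apply/negPn/negP; rewrite negb_or => /andP[tx tL].
suff /(card_bigcap_path_lt mvcx pq tx tL) : has (fun D : {set 'I_s} => t \in D) q.
  by rewrite card_eq ltnn.
apply/hasP; exists C => //; move: qC; rewrite inE => /predU1P[Cx|//].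
by rewrite -Cx tC in tx.
Qed.

Lemma card_bigcap_of_within_ends :
  (forall p, cov_path e p -> within_ends p) ->
  forall x q, cov_path e (x :: q) -> #|\bigcap_(C <- x :: q) C| + size q = alpha0 e.
Proof.
move=> within x; elim/last_ind => [|q z IHq].
  by rewrite cov_pathE big_seq1 addn0 => /andP[/card_min_vertex_cover].
move=> /[dup] pz; rewrite cov_pathE -rcons_cons rcons_uniq rcons_path.
case/and3P=> mvcx /andP[_ uq] /andP[pq adj_z].
have := IHq; rewrite cov_pathE mvcx uq pq => /(_ isT).
have [a La] := cov_adj_setD adj_z.
have /setDP[aL az] : a \in last x q :\: z by rewrite La set11.
suff aI : a \in \bigcap_(C <- x :: q) C.
  by rewrite bigcap_rcons_setD La size_rcons (cardsD1 a) aI; lia.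
rewrite bigcap_seq; apply/bigcapP => C Cxq.
move: pz aL; rewrite -rcons_cons -[last x q]/(last x (x :: q)).
case/path.splitPr: Cxq => p1 p2; rewrite rcons_cat last_cat /=.
move=> /cov_path_suffix /within /(_ (last C p2)) /=; rewrite last_rcons.
rewrite -rcons_cons mem_rcons inE mem_last orbT => /(_ isT) /subsetP sLCz /sLCz.
by rewrite inE (negbTE az) orbF.
Qed.

Lemma cov_adj_of_card_setU C D : mvc C -> mvc D -> C != D ->
  #|C :|: D| <= (alpha0 e).+1 -> adj C D.
Proof.
move=> mvcC mvcD neqCD le_card; rewrite /cov_adj mvcC mvcD neqCD eqn_leq.
rewrite (card_min_vertex_cover mvcC) le_card -(card_min_vertex_cover mvcC).
rewrite proper_card // properEneq subsetUl andbT; apply: contra neqCD => /eqP eqCU.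
have sDC := subsetUr C D; rewrite -eqCU in sDC.
by rewrite eq_sym eqEcard sDC (card_min_vertex_cover mvcC) (card_min_vertex_cover mvcD) leqnn.
Qed.

Lemma acyclic_cov_adj : (forall p, ~~ cov_cycle e p) ->
  forall c, uniq c -> cycle adj c -> size c < 3.
Proof.
move=> no_cycle [//|x c] uc cyc; rewrite ltnNge; apply: contra (no_cycle (x :: c)) => size_c.
rewrite /cov_cycle size_c uc cyc andbT /=; move: cyc => /= /path_cov_adj_min.
by rewrite all_rcons => /andP[-> ->].
Qed.

Definition cov_adj_within (U : {set 'I_s}) : rel {set 'I_s} :=
  fun C D => [&& adj C D, C \subset U & D \subset U].

Lemma path_cov_adj_within (U x : {set 'I_s}) q :
  {in x :: q, forall C : {set 'I_s}, C \subset U} ->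
  path (cov_adj_within U) x q = path adj x q.
Proof.
elim: q x => [//|y q IHq] x sub_U /=; rewrite IHq => [|C Cq]; last first.
  by apply: sub_U; rewrite inE Cq orbT.
by rewrite /cov_adj_within !sub_U ?mem_head ?inE ?eqxx ?orbT ?andbT.
Qed.

Lemma path_cov_adj_within_sub (U x : {set 'I_s}) q :
  x \subset U -> path (cov_adj_within U) x q ->
  {in x :: q, forall C : {set 'I_s}, C \subset U}.
Proof.
elim: q x => [|y q IHq] x xU /=; first by move=> _ C; rewrite inE => /eqP->.
case/andP=> /and3P[_ _ yU] /(IHq y yU) qU C; rewrite inE => /predU1P[->//|].
exact: qU.
Qed.

Definition connected_within_unions : Prop :=
  forall C D, mvc C -> mvc D -> connect (cov_adj_within (C :|: D)) C D.

Lemma within_ends_of_connected : (forall p, ~~ cov_cycle e p) ->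
  connected_within_unions -> forall p, cov_path e p -> within_ends p.
Proof.
move=> /acyclic_cov_adj acyclic conn [//|x q]; rewrite cov_pathE => /and3P[mvcx uq pq].
have /allP mvc_xq : all mvc (x :: q) by rewrite /= mvcx (path_cov_adj_min pq).
have /connectP[p0] := conn _ _ mvcx (mvc_xq _ (mem_last x q)).
case/shortenP=> p p_within up _ eq_last.
have sub_U := path_cov_adj_within_sub (subsetUl _ _) p_within.
rewrite path_cov_adj_within // in p_within.
have -> : q = p by apply: (acyclic_path_uniq cov_adj_sym acyclic pq).
by move=> C /sub_U; rewrite eq_last.
Qed.

Lemma connected_of_within_ends : cov_graph_tree e ->
  (forall p, cov_path e p -> within_ends p) -> connected_within_unions.
Proof.
move=> [conn _] within C D mvcC mvcD.
have [p [pxq [<- <-]]] := conn C D mvcC mvcD; case: p pxq => [//|x q] pxq /=.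
have sub_U := within _ pxq; move: pxq; rewrite cov_pathE => /and3P[_ _ pq].
by apply/connectP; exists q; rewrite // path_cov_adj_within.
Qed.

Lemma connected_within_unionsP : cov_graph_tree e ->
  connected_within_unions <->
  (forall p, cov_path e p ->
     size p - 1 <= alpha0 e /\ #|\bigcap_(C <- p) C| = alpha0 e - (size p - 1)).
Proof.
move=> tree; split=> [conn [//|x q] pxq | card_eq].
  have := card_bigcap_of_within_ends (within_ends_of_connected tree.2 conn) pxq.
  by rewrite /= subn1 /=; lia.
apply: connected_of_within_ends tree _ => -[//|x q] pxq.
have [] := card_eq _ pxq; move: pxq; rewrite cov_pathE /= subn1 /= => /and3P[mvcx _ pq].
by move=> le_q card_q; apply: within_ends_of_card mvcx pq _; rewrite card_q subnK.
Qed.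

End CoverGraph.

Section Monomials.
Variables (K : fieldType) (s : nat).
Local Open Scope ring_scope.
Implicit Types (p q : {mpoly K[s]}) (d : nat).

Lemma homog_of0 d : homog_of d (0 : {mpoly K[s]}).
Proof. by move=> m; rewrite msupp0. Qed.

Lemma homog_ofD d p q : homog_of d p -> homog_of d q -> homog_of d (p + q).
Proof. by move=> hp hq m /msuppD_le; rewrite mem_cat => /orP[/hp|/hq]. Qed.

Lemma homog_ofN d p : homog_of d p -> homog_of d (- p).
Proof. by move=> hp m; rewrite (perm_mem (msuppN _)) => /hp. Qed.

Lemma homog_ofX m : homog_of (mdeg m) ('X_[m] : {mpoly K[s]}).
Proof. by move=> m'; rewrite msuppX inE => /eqP ->. Qed.

Lemma le_mdeg (m1 m2 : 'X_{1..s}) : (m1 <= m2)%MM -> (mdeg m1 <= mdeg m2)%N.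
Proof. by move=> le_m; rewrite -(submK le_m) mdegD leq_addl. Qed.

Lemma subm_addK (n1 n2 m : 'X_{1..s}) :
  (n1 + n2 <= m)%MM -> (m - (n1 + n2) + n2 = m - n1)%MM.
Proof.
move/mnm_lepP => le_m; apply/mnmP => t; rewrite !(mnmDE, mnmBE).
by have := le_m t; rewrite mnmDE; lia.
Qed.

Lemma mcoeffMX_if p n m :
  (p * 'X_[n])@_m = if (n <= m)%MM then p@_(m - n)%MM else 0.
Proof.
case: ifP => [le_nm|not_le]; first by rewrite -{1}(submK le_nm) addmC mcoeffMX.
apply/eqP; rewrite mcoeff_eq0 (perm_mem (msuppMX _ _)); apply/mapP => -[m' _ eq_m].
by rewrite eq_m lem_addr in not_le.
Qed.

End Monomials.

Section Span.
Variables (K : fieldType) (s r : nat).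
Local Open Scope ring_scope.
Local Notation vec := ('I_r -> {mpoly K[s]}).
Variable gen : vec -> Prop.

Definition in_span (v : vec) : Prop :=
  exists N (c : 'I_N -> {mpoly K[s]}) (w : 'I_N -> vec),
    (forall n, gen (w n)) /\ forall k, v k = \sum_(n < N) c n * w n k.

Lemma in_span_ext v v' : in_span v -> v =1 v' -> in_span v'.
Proof.
by move=> [N [c [w [gen_w def_v]]]] eq_v; exists N, c, w; split=> // k; rewrite -eq_v.
Qed.

Lemma in_span0 : in_span (fun _ => 0).
Proof. by exists 0, (fun=> 0), (fun _ _ => 0); split => [[]|k]; rewrite ?big_ord0. Qed.

Lemma in_span_gen v : gen v -> in_span v.
Proof.
by move=> gen_v; exists 1, (fun=> 1), (fun=> v); split => // k; rewrite big_ord1 mul1r.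
Qed.

Lemma in_spanD v v' : in_span v -> in_span v' -> in_span (fun k => v k + v' k).
Proof.
move=> [N [c [w [gen_w def_v]]]] [N' [c' [w' [gen_w' def_v']]]].
pose cat_fun T (f : 'I_N -> T) (f' : 'I_N' -> T) n :=
  match split n with inl n1 => f n1 | inr n2 => f' n2 end.
exists (N + N'), (cat_fun _ c c'), (cat_fun _ w w'); split.
  by move=> n; rewrite /cat_fun; case: split.
move=> k; rewrite big_split_ord def_v def_v'; congr (_ + _); apply: eq_bigr => n _.
  by rewrite /cat_fun (unsplitK (inl n) : split (lshift N' n) = inl n).
by rewrite /cat_fun (unsplitK (inr n) : split (rshift N n) = inr n).
Qed.

Lemma in_spanM a v : in_span v -> in_span (fun k => a * v k).
Proof.
move=> [N [c [w [gen_w def_v]]]]; exists N, (fun n => a * c n), w; split => // k.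
by rewrite def_v mulr_sumr; apply: eq_bigr => n _; rewrite mulrA.
Qed.

Lemma in_span_sum (I : Type) (rs : seq I) (F : I -> vec) :
  (forall i, in_span (F i)) -> in_span (fun k => \sum_(i <- rs) F i k).
Proof.
move=> span_F; elim: rs => [|i rs IHrs].
  by apply: (in_span_ext in_span0) => k; rewrite big_nil.
by apply: (in_span_ext (in_spanD (span_F i) IHrs)) => k; rewrite big_cons.
Qed.

End Span.

Section MonomialSyzygies.
Variables (K : fieldType) (s r : nat) (mk : 'I_r -> 'X_{1..s}).
Local Open Scope ring_scope.
Local Notation S := {mpoly K[s]}.
Local Notation vec := ('I_r -> S).

Definition msyzygy (v : vec) : Prop := \sum_k v k * 'X_[mk k] = 0.

Definition linear_msyzygy (w : vec) : Prop := msyzygy w /\ forall k, homog_of 1 (w k).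

Definition evec (i : 'I_r) (p : S) : vec := fun k => if k == i then p else 0.

Lemma sum_evecM i p (F : vec) : \sum_k evec i p k * F k = p * F i.
Proof.
rewrite (bigD1 i) //= /evec eqxx big1 ?addr0 // => k /negbTE ->; exact: mul0r.
Qed.

Definition pair_msyzygy (m : 'X_{1..s}) (i j : 'I_r) : vec :=
  fun k => evec i 'X_[m - mk i] k - evec j 'X_[m - mk j] k.

Lemma pair_msyzygyP m i j :
  (mk i <= m)%MM -> (mk j <= m)%MM -> msyzygy (pair_msyzygy m i j).
Proof.
move=> le_i le_j; rewrite /msyzygy /pair_msyzygy.
under eq_bigr do rewrite mulrBl.
by rewrite sumrB !sum_evecM -!mpolyXD !submK // subrr.
Qed.

Lemma pair_msyzygy_trans m i l j k :
  pair_msyzygy m i j k = pair_msyzygy m i l k + pair_msyzygy m l j k.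
Proof. by rewrite /pair_msyzygy addrA subrK. Qed.

Lemma pair_msyzygy_refl m i k : pair_msyzygy m i i k = 0.
Proof. exact: subrr. Qed.

Definition syz_coef (v : vec) m k : K := (v k * 'X_[mk k])@_m.

Lemma sum_syz_coef v m : msyzygy v -> \sum_k syz_coef v m k = 0.
Proof. by move=> syz_v; rewrite -raddf_sum /= syz_v mcoeff0. Qed.

Definition syz_component (v : vec) m : vec := fun k => (syz_coef v m k)%:MP * 'X_[m - mk k].

Section PairSyzygiesGenerate.
Variable gen : vec -> Prop.
Hypothesis pair_in_span : forall m i j,
  (mk i <= m)%MM -> (mk j <= m)%MM -> in_span gen (pair_msyzygy m i j).

Lemma syz_component_in_span v m : msyzygy v -> in_span gen (syz_component v m).
Proof.
move=> syz_v; have coef0 k : ~~ (mk k <= m)%MM -> syz_coef v m k = 0.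
  by rewrite /syz_coef mcoeffMX_if => /negbTE ->.
case: (pickP (fun i => mk i <= m)%MM) => [i0 le_i0|none]; last first.
  apply: (in_span_ext (in_span0 _)) => k.
  by rewrite /syz_component coef0 ?none // mpolyC0 mul0r.
suff /in_span_ext : in_span gen
    (fun k => \sum_(l <- index_enum 'I_r) (syz_coef v m l)%:MP * pair_msyzygy m l i0 k).
  apply=> k; rewrite /pair_msyzygy; under eq_bigr do rewrite mulrBr.
  rewrite sumrB -mulr_suml -raddf_sum /= sum_syz_coef // mpolyC0 mul0r subr0.
  rewrite (bigD1 k) //= big1 => [|l /negbTE lk]; rewrite /evec ?eqxx ?addr0 //.
  by rewrite eq_sym lk mulr0.
apply: in_span_sum => l; have [le_l|not_le] := boolP (mk l <= m)%MM.
  exact/in_spanM/pair_in_span.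
by apply: (in_span_ext (in_span0 _)) => k; rewrite coef0 // mpolyC0 mul0r.
Qed.

Definition syz_multidegrees (v : vec) : seq 'X_{1..s} :=
  undup [seq (t + mk l)%MM | l <- enum 'I_r, t <- msupp (v l)].

Lemma syz_component_coef v m k t : (syz_component v m k)@_t = (m == t + mk k)%MM%:R * (v k)@_t.
Proof.
rewrite /syz_component mcoeffCM mcoeffX /syz_coef mcoeffMX_if.
case: ifP => [le_km|not_le]; last first.
  rewrite mul0r; have [eq_m|] := eqVneq m (t + mk k)%MM; last by rewrite mul0r.
  by rewrite eq_m lem_addl in not_le.
rewrite -(eqm_add2r (mk k)) submK //.
by have [->|_] := eqVneq; rewrite ?addmK ?mulr1 ?mul1r // mulr0 mul0r.
Qed.

Lemma sum_syz_components v k : v k = \sum_(m <- syz_multidegrees v) syz_component v m k.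
Proof.
apply/mpolyP => t; rewrite raddf_sum /=; under eq_bigr do rewrite syz_component_coef.
have [inM|notinM] := boolP ((t + mk k)%MM \in syz_multidegrees v).
  rewrite (bigD1_seq _ inM (undup_uniq _)) /= eqxx mul1r big1 ?addr0 // => m.
  by move/negbTE ->; rewrite mul0r.
rewrite big1_seq => [|m /andP[_ mM]]; last first.
  by case: eqVneq mM => [->|]; rewrite ?(negbTE notinM) ?mul0r.
apply/eqP; rewrite mcoeff_eq0; apply: contra notinM => tv.
by rewrite mem_undup; apply/allpairsPdep; exists k, t; rewrite mem_enum.
Qed.

Lemma msyzygy_in_span v : msyzygy v -> in_span gen v.
Proof.
move=> syz_v.
have := in_span_sum (syz_multidegrees v) (fun m => syz_component_in_span m syz_v).
by move/in_span_ext; apply=> k; rewrite -sum_syz_components.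
Qed.

End PairSyzygiesGenerate.

Lemma homog_of_evec d i p k : homog_of d p -> homog_of d (evec i p k).
Proof. by rewrite /evec; case: (k == i) => // _; apply: homog_of0. Qed.

Lemma linear_pair_msyzygy i j a b : (mk i + U_(b) = mk j + U_(a))%MM ->
  linear_msyzygy (fun k => evec i 'X_b k - evec j 'X_a k).
Proof.
move=> eq_lcm; split=> [|k].
  rewrite /msyzygy; under eq_bigr do rewrite mulrBl.
  by rewrite sumrB !sum_evecM -!mpolyXD ![(U_(_) + _)%MM]addmC eq_lcm subrr.
have homog_X c : homog_of 1 ('X_c : S) by rewrite -(mdeg1 c); apply: homog_ofX.
by apply: homog_ofD; [|apply: homog_ofN]; apply: homog_of_evec.
Qed.

Lemma pair_msyzygy_linear m i j a b :
  (mk i + U_(b) = mk j + U_(a))%MM -> (mk i + U_(b) <= m)%MM ->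
  in_span linear_msyzygy (pair_msyzygy m i j).
Proof.
move=> eq_lcm le_m; have [<-|ij] := eqVneq i j.
  by apply: (in_span_ext (in_span0 _)) => k; rewrite pair_msyzygy_refl.
have := in_spanM 'X_[m - (mk i + U_(b))] (in_span_gen (linear_pair_msyzygy eq_lcm)).
move/in_span_ext; apply=> k; rewrite /pair_msyzygy /evec.
have [->|_] := eqVneq k i; first by rewrite (negbTE ij) !subr0 -mpolyXD subm_addK.
have [_|_] := eqVneq k j; last by rewrite subr0 mulr0.
by rewrite !sub0r mulrN -mpolyXD eq_lcm subm_addK // -eq_lcm.
Qed.

(* P does not separate two generators dividing m in degree one less than m:
   these are the only pairs a linear syzygy links in multidegree m. *)
Definition linearly_closed (P : pred 'I_r) m : Prop :=
  forall k l, (mk k <= m)%MM -> (mk l <= m)%MM ->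
    mdeg m = (mdeg (mk k)).+1 -> mdeg m = (mdeg (mk l)).+1 -> P k = P l.

Lemma linear_msyzygy_part_coef P w m : linearly_closed P m -> linear_msyzygy w ->
  (\sum_(k | P k) w k * 'X_[mk k])@_m = 0.
Proof.
move=> closedP [syz_w deg_w]; rewrite raddf_sum /=.
have supp_coef k : syz_coef w m k != 0 -> (mk k <= m)%MM /\ mdeg m = (mdeg (mk k)).+1.
  rewrite /syz_coef mcoeffMX_if; case: ifP => [le_km|_]; last by rewrite eqxx.
  by rewrite -mcoeff_msupp => /deg_w deg1; rewrite -(submK le_km) mdegD deg1.
case: (pickP (fun k => (syz_coef w m k != 0) && P k)) => [k0 /andP[nz_k0 Pk0]|none].
  rewrite -[RHS](sum_syz_coef m syz_w) big_mkcond; apply: eq_bigr => k _.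
  case: ifP => // Pk; have [//|nz_k] := eqVneq (syz_coef w m k) 0.
  have [le_k deg_k] := supp_coef k nz_k; have [le_k0 deg_k0] := supp_coef k0 nz_k0.
  by rewrite (closedP k k0 le_k le_k0 deg_k deg_k0) Pk0 in Pk.
by apply: big1 => k Pk; apply/eqP; have := none k; rewrite Pk andbT => /negbFE.
Qed.

Lemma in_span_linear_part_coef P v m :
  (forall n, (n <= m)%MM -> linearly_closed P n) -> in_span linear_msyzygy v ->
  (\sum_(k | P k) v k * 'X_[mk k])@_m = 0.
Proof.
move=> closedP [N [c [w [lin_w def_v]]]].
under eq_bigr do rewrite def_v mulr_suml.
rewrite exchange_big raddf_sum /=; apply: big1 => n _.
under eq_bigr do rewrite -mulrA; rewrite -mulr_sumr mcoeffM big1 // => -[n1 n2] /= /eqP eq_m.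
rewrite linear_msyzygy_part_coef ?mulr0 //.
by apply: closedP; rewrite [X in (_ <= X)%MM]eq_m lem_addl.
Qed.

End MonomialSyzygies.

Section SetMonomials.
Variable s : nat.
Implicit Types (C D : {set 'I_s}) (m : 'X_{1..s}).

Definition mnm_of_set C : 'X_{1..s} := [multinom (i \in C : nat) | i < s].

Lemma mnm_of_setE C i : mnm_of_set C i = (i \in C).
Proof. by rewrite mnmE. Qed.

Lemma cover_monomialE (K : fieldType) C : cover_monomial K C = 'X_[mnm_of_set C].
Proof.
rewrite /cover_monomial mprodXE; congr 'X_[_]; apply/mnmP => i.
rewrite mnm_sumE mnm_of_setE (eq_bigr (fun j => nat_of_bool (j == i))) => [|j _]; last first.
  by rewrite mnm1E.
have [iC|iC] := boolP (i \in C); last first.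
  by rewrite big1 // => j jC; case: eqP => // ji; rewrite -ji jC in iC.
by rewrite (bigD1 i) //= eqxx big1 ?addn0 // => j /andP[_ /negbTE ->].
Qed.

Lemma mdeg_mnm_of_set C : mdeg (mnm_of_set C) = #|C|.
Proof.
rewrite mdegE (eq_bigr (fun i => nat_of_bool (i \in C))) => [|i _]; last first.
  by rewrite mnm_of_setE.
by rewrite -big_mkcond /= sum1_card.
Qed.

Lemma lem_mnm_of_set C D : (mnm_of_set C <= mnm_of_set D)%MM = (C \subset D).
Proof.
apply/mnm_lepP/subsetP => [le_CD i iC|sCD i].
  by have := le_CD i; rewrite !mnm_of_setE iC; case: (i \in D).
by rewrite !mnm_of_setE; case iC: (i \in C); rewrite //= sCD.
Qed.

Lemma lem_mnm_of_setU C D m : (mnm_of_set (C :|: D) <= m)%MM =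
  (mnm_of_set C <= m)%MM && (mnm_of_set D <= m)%MM.
Proof.
apply/mnm_lepP/andP => [le_m|[/mnm_lepP le_C /mnm_lepP le_D] i].
  split; apply/mnm_lepP => i; have := le_m i.
    by rewrite !mnm_of_setE inE; case: (i \in C).
  by rewrite !mnm_of_setE inE; case: (i \in C); case: (i \in D).
by have := le_C i; have := le_D i; rewrite !mnm_of_setE inE; case: (i \in C); case: (i \in D).
Qed.

End SetMonomials.

Section CoverIdeal.
Variables (K : fieldType) (s : nat) (e : rel 'I_s).
Local Open Scope ring_scope.
Hypothesis e_unmixed : unmixed e.

Local Notation mvc := (min_vertex_cover e).
Local Notation adj := (cov_adj e).
Local Notation r := (size (Ic_gens K e)).

Definition cov (i : 'I_r) : {set 'I_s} := nth set0 (enum mvc) i.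

Definition cov_mnm (i : 'I_r) : 'X_{1..s} := mnm_of_set (cov i).

Lemma size_Ic_gens : r = size (enum mvc).
Proof. exact: size_map. Qed.

Lemma Ic_gens_nth (i : 'I_r) : (Ic_gens K e)`_i = 'X_[cov_mnm i].
Proof.
have lt_i : (i < size (enum mvc))%N by rewrite -size_Ic_gens.
by rewrite (nth_map set0) // cover_monomialE.
Qed.

Lemma cov_min i : mvc (cov i).
Proof.
have lt_i : (i < size (enum mvc))%N by rewrite -size_Ic_gens.
by have := mem_nth set0 lt_i; rewrite mem_enum.
Qed.

Lemma cov_inj : injective cov.
Proof.
move=> i j eq_ij; apply/val_inj/eqP.
have lt_i : (i < size (enum mvc))%N by rewrite -size_Ic_gens.
have lt_j : (j < size (enum mvc))%N by rewrite -size_Ic_gens.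
by rewrite -(nth_uniq set0 lt_i lt_j (enum_uniq _)); apply/eqP.
Qed.

Lemma cov_onto C : mvc C -> exists i, cov i = C.
Proof.
move=> mvcC; have lt_C : (index C (enum mvc) < r)%N by rewrite size_Ic_gens index_mem mem_enum.
by exists (Ordinal lt_C); rewrite /cov nth_index ?mem_enum.
Qed.

Lemma syzygyE v : syzygy v = msyzygy cov_mnm v.
Proof. by rewrite /syzygy; under eq_bigr do rewrite Ic_gens_nth. Qed.

Lemma linearly_presentedE : linearly_presented (Ic_gens K e) <->
  forall v : 'I_r -> {mpoly K[s]}, msyzygy cov_mnm v -> in_span (linear_msyzygy cov_mnm) v.
Proof.
split=> [[_ LP] v|span].
  rewrite -syzygyE => /LP[N [c [w [lin_w def_v]]]]; exists N, c, w; split=> // n.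
  by rewrite /linear_msyzygy -syzygyE.
split=> [|v].
  exists (alpha0 e) => _ /mapP[C + ->]; rewrite mem_enum cover_monomialE => mvcC.
  by rewrite -(card_min_vertex_cover e_unmixed mvcC) -mdeg_mnm_of_set; apply: homog_ofX.
rewrite syzygyE => /span[N [c [w [lin_w def_v]]]]; exists N, c, w; split=> // n.
by rewrite syzygyE; apply: lin_w.
Qed.

Lemma mnm_of_set_cov_adj C D : adj C D ->
  exists b, (mnm_of_set C + U_(b) = mnm_of_set (C :|: D))%MM.
Proof.
rewrite (cov_adj_sym e_unmixed) => /(cov_adj_setD e_unmixed)[b DCb]; exists b.
apply/mnmP => t; rewrite mnmDE !mnm_of_setE mnm1E inE.
have := congr1 (fun A : {set 'I_s} => t \in A) DCb; rewrite /= !inE eq_sym.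
by case: (t \in C); case: (t \in D) => //= <-.
Qed.

Lemma pair_msyzygy_cov_adj m i j : adj (cov i) (cov j) ->
  (cov_mnm i <= m)%MM -> (cov_mnm j <= m)%MM ->
  in_span (linear_msyzygy cov_mnm) (pair_msyzygy K cov_mnm m i j).
Proof.
move=> adj_ij le_i le_j; have [b eq_b] := mnm_of_set_cov_adj adj_ij.
have [a eq_a] : exists a, (mnm_of_set (cov j) + U_(a) = mnm_of_set (cov j :|: cov i))%MM.
  by apply: mnm_of_set_cov_adj; rewrite (cov_adj_sym e_unmixed).
have eq_lcm : (cov_mnm i + U_(b) = cov_mnm j + U_(a))%MM by rewrite /cov_mnm eq_b eq_a setUC.
by apply: (pair_msyzygy_linear K eq_lcm); rewrite /cov_mnm eq_b lem_mnm_of_setU le_i le_j.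
Qed.

Lemma pair_msyzygy_cov_path m x q i j : path adj x q ->
  {in x :: q, forall C, (mnm_of_set C <= m)%MM} -> cov i = x -> cov j = last x q ->
  in_span (linear_msyzygy cov_mnm) (pair_msyzygy K cov_mnm m i j).
Proof.
elim: q x i => [|y q IHq] x i /= pq le_m eq_i eq_j.
  have <- : i = j by apply: cov_inj; rewrite eq_i eq_j.
  by apply: (in_span_ext (in_span0 _)) => k; rewrite pair_msyzygy_refl.
case/andP: pq => adj_xy pq; have [k eq_k] := cov_onto (cov_adj_min adj_xy).2.
have le_q : {in y :: q, forall C, (mnm_of_set C <= m)%MM}.
  by move=> C Cq; apply: le_m; rewrite inE Cq orbT.
have span_ik : in_span (linear_msyzygy cov_mnm) (pair_msyzygy K cov_mnm m i k).
  apply: pair_msyzygy_cov_adj; rewrite /cov_mnm ?eq_i ?eq_k //.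
    exact/le_m/mem_head.
  exact/le_q/mem_head.
have span_kj := IHq y k pq le_q eq_k eq_j.
by apply: (in_span_ext (in_spanD span_ik span_kj)) => l; rewrite -pair_msyzygy_trans.
Qed.

Lemma linearly_presented_of_connected :
  connected_within_unions e -> linearly_presented (Ic_gens K e).
Proof.
move=> conn; apply/linearly_presentedE => v; apply: msyzygy_in_span => m i j le_i le_j.
have /connectP[q pq eq_last] := conn _ _ (cov_min i) (cov_min j).
have sub_U := path_cov_adj_within_sub (subsetUl _ _) pq.
rewrite path_cov_adj_within // in pq.
apply: (pair_msyzygy_cov_path pq) eq_last => // C /sub_U; rewrite -lem_mnm_of_set => le_U.
by apply: lepm_trans le_U _; rewrite lem_mnm_of_setU le_i le_j.
Qed.

Lemma linearly_closed_connect_within U C n : (n <= mnm_of_set U)%MM ->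
  linearly_closed cov_mnm (fun k => connect (cov_adj_within e U) C (cov k)) n.
Proof.
move=> le_n k l le_k le_l deg_k deg_l; have [->//|neq_kl] := eqVneq k l.
have sub_U i : (cov_mnm i <= n)%MM -> cov i \subset U.
  by move=> le_i; rewrite -lem_mnm_of_set (lepm_trans le_i le_n).
have adj_kl : adj (cov k) (cov l).
  apply: cov_adj_of_card_setU; rewrite ?cov_min ?(inj_eq cov_inj) //.
  rewrite -mdeg_mnm_of_set -(card_min_vertex_cover e_unmixed (cov_min k)).
  by rewrite -mdeg_mnm_of_set -deg_k le_mdeg // lem_mnm_of_setU le_k le_l.
have within_kl : cov_adj_within e U (cov k) (cov l).
  by rewrite /cov_adj_within adj_kl !sub_U.
have within_lk : cov_adj_within e U (cov l) (cov k).
  by rewrite /cov_adj_within (cov_adj_sym e_unmixed) adj_kl !sub_U.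
by apply/idP/idP => conn_C; apply: connect_trans conn_C (connect1 _).
Qed.

(* Summing the coefficients of t^(C u D) over the covers reachable from C
   inside C u D kills every combination of linear syzygies, but gives 1 on
   the pair syzygy of C and D unless D is reachable. *)
Lemma connected_of_linearly_presented :
  linearly_presented (Ic_gens K e) -> connected_within_unions e.
Proof.
move/linearly_presentedE => span C D mvcC mvcD; apply: contraT => not_conn.
have [i eq_i] := cov_onto mvcC; have [j eq_j] := cov_onto mvcD.
pose m := mnm_of_set (C :|: D).
have le_i : (cov_mnm i <= m)%MM by rewrite lem_mnm_of_set eq_i subsetUl.
have le_j : (cov_mnm j <= m)%MM by rewrite lem_mnm_of_set eq_j subsetUr.
have closedP n (le_n : (n <= m)%MM) := linearly_closed_connect_within C le_n.
have := in_span_linear_part_coef closedP (span _ (pair_msyzygyP K le_i le_j)).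
have neq_ij : i != j.
  by apply: contraNneq not_conn => eq_ij; rewrite -eq_i -eq_j eq_ij connect0.
rewrite (bigD1 i) ?eq_i ?connect0 //= big1 => [|k /andP[conn_k neq_ki]]; last first.
  have neq_kj : k != j.
    by apply: contraNneq not_conn => eq_kj; move: conn_k; rewrite eq_kj eq_j.
  by rewrite /pair_msyzygy /evec (negbTE neq_ki) (negbTE neq_kj) subrr mul0r.
rewrite /pair_msyzygy /evec eqxx (negbTE neq_ij) subr0 addr0 -mpolyXD submK //.
by rewrite mcoeffX eqxx => /eqP; rewrite oner_eq0.
Qed.

Lemma linearly_presentedP :
  linearly_presented (Ic_gens K e) <-> connected_within_unions e.
Proof.
split; [exact: connected_of_linearly_presented | exact: linearly_presented_of_connected].
Qed.

End CoverIdeal.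

Theorem corollary4p7 (K : fieldType) (s : nat) (e : rel 'I_s) :
  simple_graph e -> unmixed e -> cov_graph_tree e ->
  linearly_presented (Ic_gens K e) <->
  (forall p : seq {set 'I_s}, cov_path e p ->
     size p - 1 <= alpha0 e /\
     #|\bigcap_(C <- p) C| = alpha0 e - (size p - 1)).
Proof.
move=> _ e_unmixed tree.
exact: iff_trans (linearly_presentedP K e_unmixed) (connected_within_unionsP e_unmixed tree).
Qed.
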